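(* Let $\lambda=(\lambda_1,\ldots,\lambda_n)\in\mathbb{R}_{<0}^n$ have pairwise distinct entries. Then $\nu_{k,\lambda}(t)\ge 0$ for all $t\ge 0$ and all $k=0,\ldots,n-1$.
   Context: $V_\lambda$ is the $n\times n$ Vandermonde matrix with $(i,j)$ entry $\lambda_j^{i-1}$, and the Vandermonde basis functions are defined by $[\nu_{0,\lambda}(t),\ldots,\nu_{n-1,\lambda}(t)]=[e^{\lambda_1 t},\ldots,e^{\lambda_n t}]V_\lambda^{-1}$. *)

From mathcomp Require Import all_boot all_order all_algebra.
From mathcomp Require Import all_classical all_reals all_analysis.
Set Implicit Arguments. Unset Strict Implicit. Unset Printing Implicit Defensive.
Import Order.TTheory GRing.Theory Num.Theory.
Local Open Scope ring_scope.

(* V_lambda : the n x n Vandermonde matrix, entry (i,j) = lambda_j ^ i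
   (0-indexed rows, i.e. lambda_j^(i-1) with 1-indexed rows): MathComp's
   [Vandermonde n lam] is exactly \matrix_(i, j) lam 0 j ^+ i. *)
Definition vander_mx (R : realType) (n : nat) (lam : 'rV[R]_n) : 'M[R]_n :=
  Vandermonde n lam.

Definition vbasis (R : realType) (n : nat) (lam : 'rV[R]_n) (t : R) : 'rV[R]_n :=
  (\row_j expR (lam 0 j * t)) *m invmx (vander_mx lam).

Definition nu (R : realType) (n : nat) (k : 'I_n) (lam : 'rV[R]_n) (t : R) : R :=
  vbasis lam t 0 k.

From mathcomp Require Import all_boot all_order all_algebra.
From mathcomp Require Import all_classical all_reals all_analysis.
From mathcomp Require Import ring.
Import Order.TTheory GRing.Theory Num.Theory.
Local Open Scope ring_scope.

(* nu_{k,lam}(t) is the coefficient of x^k in the polynomial P of degree < n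
   interpolating x |-> e^{xt} at the nodes lam.  Its leading coefficient is the
   divided difference of e^{.t} at the nodes: writing l for the last node and
   lam' for the other ones, g(t) = e^{-lt} nu_{n-1,lam}(t) vanishes at t = 0 and,
   by the recursion of divided differences, has derivative
   e^{-lt} nu_{n-2,lam'}(t); so by induction on n the leading coefficient is
   nonnegative for t >= 0, whatever the (distinct, real) nodes.  For the other
   coefficients, P - nu_{n-1,lam}(t) * prod_{j<n-1} (x - lam_j) interpolates
   e^{xt} at lam', hence is the interpolant for lam'; as the nodes are negative
   the product has nonnegative coefficients, and induction on n concludes. *)

Definition drop_last {T : Type} {n : nat} (v : 'rV[T]_n.+1) : 'rV[T]_n :=
  \row_j v 0 (lift ord_max j).

Lemma drop_last_inj {T : Type} {n : nat} {v : 'rV[T]_n.+1} :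
  injective (v 0) -> injective (drop_last v 0).
Proof. by move=> v_inj i j; rewrite !mxE => /v_inj/lift_inj. Qed.

Section Interpolation.
Context {F : fieldType} {n : nat} (a : 'rV[F]_n).

Definition interp (y : 'rV[F]_n) : {poly F} :=
  rVpoly (y *m invmx (Vandermonde n a)).

Lemma size_interp y : (size (interp y) <= n)%N.
Proof. exact: size_poly. Qed.

Lemma coef_interp y (k : 'I_n) :
  (interp y)`_k = \sum_j y 0 j * invmx (Vandermonde n a) j k.
Proof. by rewrite coef_rVpoly_ord mxE. Qed.

Lemma horner_rVpoly_Vandermonde (c : 'rV[F]_n) j :
  (rVpoly c).[a 0 j] = (c *m Vandermonde n a) 0 j.
Proof.
rewrite (horner_coef_wide _ (size_poly _ _)) mxE.
by apply: eq_bigr => k _; rewrite coef_rVpoly_ord mxE.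
Qed.

Hypothesis a_inj : injective (a 0).

Lemma Vandermonde_unitmx : Vandermonde n a \in unitmx.
Proof.
rewrite unitmxE unitfE det_Vandermonde.
apply/prodf_neq0 => i _; apply/prodf_neq0 => j ij; rewrite subr_eq0.
by apply: contraTneq ij => /a_inj ->; rewrite ltnn.
Qed.

Lemma horner_interp y j : (interp y).[a 0 j] = y 0 j.
Proof. by rewrite horner_rVpoly_Vandermonde mulmxKV // Vandermonde_unitmx. Qed.

Lemma interp_unique (y : 'rV[F]_n) (q : {poly F}) :
  (size q <= n)%N -> (forall j, q.[a 0 j] = y 0 j) -> interp y = q.
Proof.
move=> size_q q_y; rewrite -(poly_rV_K size_q); congr rVpoly.
have -> : y = poly_rV q *m Vandermonde n a.
  by apply/rowP => j; rewrite -horner_rVpoly_Vandermonde poly_rV_K.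
by rewrite mulmxK // Vandermonde_unitmx.
Qed.

End Interpolation.

Section InterpolationRecursion.
Context {F : fieldType} {n : nat} (a : 'rV[F]_n.+1).
Hypothesis a_inj : injective (a 0).

Lemma interp_drop_last (y : 'rV[F]_n.+1) :
  interp (drop_last a) (drop_last y) =
  interp a y - (interp a y)`_n *: \prod_(j < n) ('X - (drop_last a 0 j)%:P).
Proof.
set w := \prod_(j < n) _.
have size_w : size w = n.+1.
  by rewrite size_prod_XsubC -[index_enum _]enumT size_enum_ord.
have lead_w : w`_n = 1.
  have /monicP := monic_prod_XsubC (index_enum 'I_n) xpredT (drop_last a 0).
  by rewrite lead_coefE size_w.
apply: interp_unique; first exact: drop_last_inj.
- apply/leq_sizeP => i; rewrite leq_eqVlt coefB coefZ => /predU1P[n_eq_i|n_lt_i].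
    by rewrite -n_eq_i lead_w mulr1 subrr.
  have size_lt_i : (size (interp a y) <= i)%N.
    exact: leq_trans (size_interp _ _) n_lt_i.
  rewrite [(interp a y)`_i]nth_default //.
  by rewrite [w`_i]nth_default ?size_w // mulr0 subr0.
- move=> j; rewrite hornerD hornerN hornerZ horner_prod (bigD1 j) //=.
  by rewrite hornerXsubC subrr mul0r mulr0 subr0 !mxE horner_interp.
Qed.

Lemma interp_mulXsubC (y : 'rV[F]_n.+1) :
  interp a (\row_j ((a 0 j - a 0 ord_max) * y 0 j)) =
  ('X - (a 0 ord_max)%:P) * interp (drop_last a) (drop_last y).
Proof.
apply: interp_unique => //.
  apply: leq_trans (size_polyMleq _ _) _.
  by rewrite size_XsubC add2n ltnS size_interp.
move=> j; rewrite hornerM hornerXsubC mxE; case: (unliftP ord_max j) => [j'|] ->.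
  have := horner_interp _ (drop_last_inj a_inj) (drop_last y) j'.
  by rewrite !mxE => ->.
by rewrite subrr !mul0r.
Qed.

End InterpolationRecursion.

Lemma coef_interp_mulXsubC {F : fieldType} {n : nat} (a y : 'rV[F]_n.+2) :
  injective (a 0) ->
  (interp a (\row_j ((a 0 j - a 0 ord_max) * y 0 j)))`_n.+1 =
  (interp (drop_last a) (drop_last y))`_n.
Proof.
move=> a_inj; rewrite interp_mulXsubC // mulrBl coefB coefXM coefCM /=.
by rewrite [X in _ - _ * X]nth_default ?mulr0 ?subr0 ?size_interp.
Qed.

Lemma coef_prod_XsubC_ge0 (R : numDomainType) (I : Type) (r : seq I)
    (c : I -> R) (k : nat) :
  (forall i, c i <= 0) -> 0 <= (\prod_(i <- r) ('X - (c i)%:P))`_k.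
Proof.
move=> c_le0; elim/big_ind: _ k => [k|p q p_ge0 q_ge0 k|i _ [|[|k]]].
- by rewrite coef1 ler0n.
- by rewrite coefM; apply: sumr_ge0 => j _; exact: mulr_ge0.
- by rewrite coefB coefX coefC sub0r oppr_ge0.
- by rewrite coefB coefX coefC subr0.
- by rewrite coefB coefX coefC subr0.
Qed.

Lemma is_derive_sum_expR {R : realType} {m : nat} (c mu : 'I_m -> R) (x : R) :
  is_derive x 1 (fun s => \sum_j c j * expR (mu j * s))
    (\sum_j c j * (mu j * expR (mu j * x))).
Proof.
rewrite [X in is_derive _ _ X](_ : _ = \sum_j (fun s => c j * expR (mu j * s))).
  apply: is_derive_sum => j.
  have d_mul : is_derive x 1 ( *%R (mu j)) (mu j).
    by apply: is_derive_eq; rewrite /GRing.scale /= mulr1.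
  have d_exp : is_derive x 1 (fun s => expR (mu j * s)) (expR (mu j * x) * mu j).
    exact: is_derive1_comp.
  have d_scaled := is_deriveZ (c j) d_exp.
  by apply: is_derive_eq; rewrite /GRing.scale /= (mulrC (expR _)).
by apply/funext => s; rewrite fct_sumE.
Qed.

Lemma ger0_is_derive_le {R : realType} {f df : R -> R} {a b : R} :
  (forall x : R, is_derive x 1 f (df x)) -> (forall x, a < x < b -> 0 <= df x) ->
  a <= b -> f a <= f b.
Proof.
move=> f_df df_ge0 a_le_b.
apply: (@ger0_derive1_ndecr _ _ a b) => //.
- by move=> x /df_ge0; rewrite derive1E derive_val.
- by apply: derivable_within_continuous => x _.
Qed.

Section ExpInterpolation.
Variable R : realType.

Definition exp_row {n : nat} (lam : 'rV[R]_n) (t : R) : 'rV[R]_n :=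
  \row_j expR (lam 0 j * t).

Lemma drop_last_exp_row (n : nat) (lam : 'rV[R]_n.+1) (t : R) :
  drop_last (exp_row lam t) = exp_row (drop_last lam) t.
Proof. by apply/rowP => j; rewrite !mxE. Qed.

Lemma nuE (n : nat) (lam : 'rV[R]_n) (k : 'I_n) (t : R) :
  nu k lam t = (interp lam (exp_row lam t))`_k.
Proof. by rewrite coef_rVpoly_ord. Qed.

Lemma nu_last0 (n : nat) (lam : 'rV[R]_n.+2) :
  injective (lam 0) -> nu ord_max lam 0 = 0.
Proof.
move=> lam_inj; rewrite nuE (@interp_unique _ _ _ lam_inj _ 1) ?coef1 //.
  by rewrite size_poly1.
by move=> j; rewrite hornerC mxE mulr0 expR0.
Qed.

Lemma nu_last_ge0 (n : nat) (lam : 'rV[R]_n.+1) (t : R) :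
  injective (lam 0) -> 0 <= t -> 0 <= nu ord_max lam t.
Proof.
elim: n lam t => [|n IH] lam t lam_inj t_ge0.
  rewrite nuE (@interp_unique _ _ _ lam_inj _ (expR (lam 0 0 * t))%:P).
  - by rewrite coefC expR_ge0.
  - exact: size_polyC_leq1.
  - by move=> j; rewrite hornerC mxE (ord1 j).
set l := lam 0 ord_max; set W := fun j => invmx (Vandermonde _ lam) j ord_max.
pose g s := \sum_j W j * expR ((lam 0 j - l) * s).
have nu_g s : nu ord_max lam s = expR (l * s) * g s.
  rewrite nuE coef_interp mulr_sumr; apply: eq_bigr => j _.
  by rewrite mxE mulrCA -expRD mulrBl addrC subrK mulrC.
have g'E x : \sum_j W j * ((lam 0 j - l) * expR ((lam 0 j - l) * x)) =
    expR (- (l * x)) * nu ord_max (drop_last lam) x.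
  rewrite nuE -drop_last_exp_row -coef_interp_mulXsubC //.
  rewrite (coef_interp _ _ ord_max) mulr_sumr; apply: eq_bigr => j _.
  by rewrite !mxE -/l -/(W j) [(_ - l) * x]mulrBl expRD; ring.
have g0 : g 0 = 0 by have := nu_g 0; rewrite nu_last0 // mulr0 expR0 mul1r.
have g_ge0 : 0 <= g t.
  rewrite -g0; apply: (ger0_is_derive_le (is_derive_sum_expR _ _)) => // x.
  case/andP => x_gt0 _; rewrite g'E mulr_ge0 ?expR_ge0 // IH ?ltW //.
  exact: drop_last_inj.
by rewrite nu_g mulr_ge0 ?expR_ge0.
Qed.

Lemma nu_lift_max (n : nat) (lam : 'rV[R]_n.+1) (k : 'I_n) (t : R) :
  injective (lam 0) ->
  nu (lift ord_max k) lam t = nu k (drop_last lam) t +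
    nu ord_max lam t * (\prod_(j < n) ('X - (drop_last lam 0 j)%:P))`_k.
Proof.
move=> lam_inj; rewrite !nuE -drop_last_exp_row interp_drop_last // lift_max.
by rewrite coefB coefZ subrK.
Qed.

Lemma nu_ge0 (n : nat) (lam : 'rV[R]_n) (k : 'I_n) (t : R) :
  (forall j, lam 0 j < 0) -> injective (lam 0) -> 0 <= t -> 0 <= nu k lam t.
Proof.
move=> + + t_ge0; elim: n lam k => [|n IH] lam k lam_lt0 lam_inj; first by case: k.
case: (unliftP ord_max k) => [k'|] ->; last exact: nu_last_ge0.
rewrite nu_lift_max // addr_ge0 ?mulr_ge0 ?nu_last_ge0 //.
  by apply: IH; [move=> j; rewrite mxE | exact: drop_last_inj].
by apply: coef_prod_XsubC_ge0 => j; rewrite mxE ltW.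
Qed.

End ExpInterpolation.

Theorem proposition6 (R : realType) (n : nat) (lam : 'rV[R]_n) :
  (forall j : 'I_n, lam 0 j < 0) ->
  (forall i j : 'I_n, i != j -> lam 0 i != lam 0 j) ->
  forall (k : 'I_n) (t : R), 0 <= t -> 0 <= nu k lam t.
Proof.
move=> lam_lt0 lam_neq k t t_ge0; apply: nu_ge0 => // i j.
exact: contra_eq (lam_neq i j).
Qed.
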